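(* Let $c>0$ and let $\mathcal{F}_c:\mathbb{R}\to[-c,c]$ be defined by $\mathcal{F}_c(z)=-c$ if $z<-c$, $\mathcal{F}_c(z)=z$ if $-c\le z\le c$, and $\mathcal{F}_c(z)=c$ if $z>c$. Let $G=(V,E)$ be a complete signed graph on $V=\{1,\dots,n\}$ that is structurally balanced with respect to a partition $V=V_1\cup V_2$. Let $\alpha\in(0,1/2)$ and $\beta>0$, and define $\theta:E\to\mathbb{R}$ by $\theta(\{i,j\})=\alpha$ if $\{i,j\}\in E^+$ and $\theta(\{i,j\})=-\beta$ if $\{i,j\}\in E^-$. Consider the random dynamics on $x(t)\in[-c,c]^n$ in which at each time $t$ an edge $\{i,j\}\in E$ is selected by the random pair selection process and $$x_s(t+1)=\mathcal{F}_c\big((1-\theta(\{i,j\}))x_s(t)+\theta(\{i,j\})x_{-s}(t)\big),\quad s\in\{i,j\},\ \{-s\}=\{i,j\}\setminus\{s\},$$ while $x_k(t+1)=x_k(t)$ for all $k\notin\{i,j\}$. Then there exists $\beta_0>0$ such that for every $\beta>\beta_0$ and for Lebesgue-almost every initial value $x(0)$, there is a random variable $l(x(0))$ taking values in $\{-c,c\}$ such that $$\mathbb{P}\Big(\lim_{t\to\infty}x_i(t)=l(x(0))\ \forall i\in V_1;\ \lim_{t\to\infty}x_i(t)=-l(x(0))\ \forall i\in V_2\Big)=1.$$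
   Context: A signed graph is an undirected simple graph whose edge set $E$ is partitioned into positive edges $E^+$ and negative edges $E^-$; it is complete if every pair of distinct nodes is joined by an edge (positive or negative). A signed graph is structurally balanced if there is a partition $V=V_1\cup V_2$ into two nonempty disjoint sets such that every edge between $V_1$ and $V_2$ is negative and every edge within $V_1$ or within $V_2$ is positive. Random pair selection process: the edges selected at times $t=0,1,2,\dots$ are independent, each drawn uniformly at random from $E$. *)

From HB Require Import structures.
From mathcomp Require Import all_boot all_order all_algebra.
From mathcomp Require Import all_classical all_reals all_analysis.
Set Implicit Arguments. Unset Strict Implicit. Unset Printing Implicit Defensive.
Import Order.TTheory GRing.Theory Num.Theory.
Import numFieldNormedType.Exports.
Local Open Scope classical_set_scope.
Local Open Scope ring_scope.

(* Edges of the complete graph on V = 'I_n: unordered pairs {i,j}, i <> j,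
   represented as ordered pairs (i,j) with i < j. *)
Definition edge (n : nat) := {p : 'I_n * 'I_n | (p.1 < p.2)%N}.

Definition Fc {R : realType} (c z : R) : R :=
  if z < - c then - c else if z <= c then z else c.

(* complete signed graph: pos i j = true iff {i,j} in E^+, otherwise in E^- *)
Definition signed_complete n (pos : rel 'I_n) :=
  forall i j, i != j -> pos i j = pos j i.

Definition structurally_balanced n (pos : rel 'I_n) (V1 V2 : {set 'I_n}) :=
  [/\ (exists i, i \in V1), (exists j, j \in V2), (forall k, ~~ ((k \in V1) && (k \in V2))) & (forall k, (k \in V1) || (k \in V2))] /\
  ((forall i j, i != j -> i \in V1 -> j \in V2 -> ~~ pos i j /\ ~~ pos j i) /\
      (forall i j, i != j -> ((i \in V1) && (j \in V1)) || ((i \in V2) && (j \in V2))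
                 -> pos i j)).

Definition theta {R : realType} n (pos : rel 'I_n) (alpha beta : R) (i j : 'I_n) : R :=
  if pos i j then alpha else - beta.

Definition step {R : realType} n (pos : rel 'I_n) (c alpha beta : R)
    (e : edge n) (x : 'I_n -> R) : 'I_n -> R :=
  let i := (val e).1 in let j := (val e).2 in
  let th := theta pos alpha beta i j in
  fun k => if k == i then Fc c ((1 - th) * x i + th * x j)
           else if k == j then Fc c ((1 - th) * x j + th * x i)
           else x k.

Fixpoint traj {R : realType} n (pos : rel 'I_n) (c alpha beta : R)
    (es : nat -> edge n) (x0 : 'I_n -> R) (t : nat) : 'I_n -> R :=
  match t with
  | 0 => x0
  | t'.+1 => step pos c alpha beta (es t') (traj pos c alpha beta es x0 t')
  end.

Definition lebesgue_null {R : realType} n (N : set ('I_n -> R)) :=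
  forall eps : R, 0 < eps -> exists a b : nat -> 'I_n -> R,
    (forall k i, a k i <= b k i) /\
    N `<=` \bigcup_k [set x | forall i, a k i <= x i <= b k i] /\
    (forall m, \sum_(k < m) \prod_(i < n) (b k i - a k i) <= eps).

Definition random_pair_selection {R : realType} (d : measure_display)
    (T : measurableType d) (P : probability T R) n (e : nat -> T -> edge n) :=
  [/\ (forall t a, measurable (e t @^-1` [set a])),
      (forall t a, P (e t @^-1` [set a]) = ((#|{: edge n}|%:R)^-1)%:E) &
      (forall (s : seq nat) (a : nat -> edge n), uniq s ->
         P (\bigcap_(t in [set t | t \in s]) (e t @^-1` [set a t])) =
         (\prod_(t <- s) P (e t @^-1` [set a t]))%E)].

From HB Require Import structures.
From mathcomp Require Import all_boot all_order all_algebra.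
From mathcomp Require Import all_classical all_reals all_analysis.
From mathcomp Require Import ring lra.
Import Order.TTheory GRing.Theory Num.Theory.
Import numFieldNormedType.Exports.
Local Open Scope classical_set_scope.
Local Open Scope ring_scope.
Set Implicit Arguments. Unset Strict Implicit. Unset Printing Implicit Defensive.

(* Let [spread x] be the largest gap [x i - x j].  A single update shrinks the spread by
   at most the factor [1 - 2 alpha], while the update along a suitable negative edge
   multiplies it by [(1 + beta) / 2] until it saturates.  Once [beta * spread x >= 4 c],
   one negative update pushes two agents of opposite groups to [c] and [-c], and [3 n]
   further updates recruit every agent to the extreme value of its group: the resulting
   polarized states are absorbing.  Hence, for a small exponent [s], the function
   [U x = (2 c / spread x) ^ s] (and [U = 0] on polarized states) contracts in expectation
   by a factor [rho < 1] over every block of [3 n + 1] steps, as each block contains, with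
   probability at least [|E|^-(3n+1)], a run that halves [U].  Since [U >= 1] off polarized
   states, the dynamics polarizes almost surely unless the initial spread is [0], i.e.
   unless [x(0)] lies on the diagonal, a Lebesgue-null set. *)

Local Ltac Fc_cases := rewrite /Fc; repeat (let h := fresh "h" in case: ifP => h;
   [ | move/negbT: h; rewrite -?leNgt -?ltNge => h]).

Section Saturation.
Variables (R : realType) (c : R).

Lemma Fc_bound z : 0 < c -> - c <= Fc c z <= c.
Proof. by move=> c0; Fc_cases; apply/andP; split; lra. Qed.

Lemma Fc_id z : - c <= z <= c -> Fc c z = z.
Proof. by case/andP=> h1 h2; Fc_cases; apply/eqP; rewrite eq_le; apply/andP; split; lra. Qed.

Lemma Fc_top z : 0 < c -> c <= z -> Fc c z = c.
Proof. by move=> c0 h0; Fc_cases; apply/eqP; rewrite eq_le; apply/andP; split; lra. Qed.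

Lemma Fc_bot z : 0 < c -> z <= - c -> Fc c z = - c.
Proof. by move=> c0 h0; Fc_cases; apply/eqP; rewrite eq_le; apply/andP; split; lra. Qed.

Lemma Fc_ge u z : - c <= u <= c -> u <= z -> u <= Fc c z.
Proof. by case/andP=> h1 h2 h0; Fc_cases; lra. Qed.

Lemma Fc_le u z : - c <= u <= c -> z <= u -> Fc c z <= u.
Proof. by case/andP=> h1 h2 h0; Fc_cases; lra. Qed.

Lemma FcN z : 0 < c -> Fc c (- z) = - Fc c z.
Proof. by move=> c0; Fc_cases; apply/eqP; rewrite eq_le; apply/andP; split; lra. Qed.

Lemma Fc_spread a b g : 0 < c -> - c <= b -> a <= c -> b <= a -> 0 <= g ->
  Num.min (2 * c) (a - b + g) <= Fc c (a + g) - Fc c (b - g).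
Proof.
by move=> c0 hb ha hab hg; rewrite ge_min; Fc_cases; apply/orP; (try by left; lra); right; lra.
Qed.

Lemma Fc_convex a b t : - c <= a <= c -> - c <= b <= c -> 0 <= t <= 1 ->
  Fc c (a + t * (b - a)) = a + t * (b - a).
Proof. by move=> /andP[? ?] /andP[? ?] /andP[? ?]; apply: Fc_id; apply/andP; split; nra. Qed.

End Saturation.

Lemma le0_geometric (R : realType) (r C x : R) : 0 <= r < 1 ->
  (forall k, x <= r ^+ k * C) -> x <= 0.
Proof.
move=> /andP[r0 r1] hx.
have cv : (fun k => r ^+ k * C) @ \oo --> 0.
  by rewrite -(mul0r C); apply: cvgM; [apply: cvg_expr; rewrite ger0_norm | exact: cvg_cst].
by rewrite -(cvg_lim _ cv) //; apply: limr_ge; [exact: cvgP cv | exact: nearW].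
Qed.

Lemma le_measure_bigsetU d (T : measurableType d) (R : realType)
    (mu : {measure set T -> \bar R}) (I : Type) (s : seq I) (P : pred I) (F : I -> set T) :
  (forall i, measurable (F i)) ->
  (mu (\big[setU/set0]_(i <- s | P i) F i) <= \sum_(i <- s | P i) mu (F i))%E.
Proof.
move=> hm; elim: s => [|a s IH]; first by rewrite !big_nil measure0.
rewrite !big_cons; case: ifP => // _.
apply: le_trans (measureU2 _ (hm a) (bigsetU_measurable _ _)) _ => //.
exact: leeD2l.
Qed.

Lemma exists_powR_le (R : realType) (a b : R) : 1 < a -> 1 < b -> exists2 s, 0 < s & a `^ s <= b.
Proof.
move=> a1 b1; have la : 0 < ln a by apply: ln_gt0.
exists (ln b / ln a); first by apply: divr_gt0 => //; apply: ln_gt0.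
rewrite /powR ifF; last by apply/negbTE; rewrite gt_eqF //; lra.
by rewrite divfK ?gt_eqF // lnK // posrE; lra.
Qed.

Lemma le_powR_of_root (R : realType) (s a b : R) : 0 < s -> 0 <= a -> a `^ s^-1 <= b ->
  a <= b `^ s.
Proof.
move=> s0 a0 hab; rewrite -[leLHS](powRr1 a0) -[in leLHS](mulVf (lt0r_neq0 s0)) powRrM.
have b0 : 0 <= b := le_trans (powR_ge0 _ _) hab.
by apply: ge0_ler_powR; rewrite ?nnegrE ?powR_ge0 //; exact: ltW.
Qed.

Lemma sum_ord_truncated (R : pzSemiRingType) (m K : nat) (v : R) :
  \sum_(k < m) (if (k < K)%N then v else 0) = (minn m K)%:R * v.
Proof.
elim: m => [|m IH]; first by rewrite big_ord0 min0n mul0r.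
rewrite big_ord_recr /= IH; case: (ltnP m K) => hm.
  by rewrite (minn_idPl hm) -natr1 mulrDl mul1r.
by rewrite addr0 (minn_idPr (leqW hm)).
Qed.

Lemma exists_grid_cell (R : realType) (c h : R) (K : nat) : 0 < h -> K.+1%:R * h = 2 * c ->
  forall v, - c <= v <= c -> exists2 k, (k <= K)%N & - c + k%:R * h <= v <= - c + k.+1%:R * h.
Proof.
move=> h0 hK v /andP[v1 v2]; set t := (v + c) / h.
have t0 : 0 <= t by apply: divr_ge0; lra.
have th : t * h = v + c by rewrite /t divfK // gt_eqF.
case: (leqP (Num.truncn t) K) => hk.
  have /andP[t1 t2] := truncn_itv t0.
  have h1 := ler_wpM2r (ltW h0) t1.
  have h2 : t * h < (Num.truncn t).+1%:R * h by rewrite ltr_pM2r.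
  by rewrite th in h1 h2; exists (Num.truncn t) => //; apply/andP; split; lra.
have : K.+1%:R <= t by rewrite -truncn_ge_nat.
move=> /(ler_wpM2r (ltW h0)); rewrite th hK => hv.
have : K%:R * h <= K.+1%:R * h by apply: ler_wpM2r; [exact: ltW | rewrite ler_nat].
by exists K => //; apply/andP; split; lra.
Qed.

Lemma mul_expr_div_le (R : realFieldType) (n K : nat) (a : R) : (1 < n)%N -> (0 < K)%N ->
  0 <= a -> K%:R * (a / K%:R) ^+ n <= a ^+ n / K%:R.
Proof.
move=> n2 K0 a0; have KR : 0 < K%:R :> R by rewrite ltr0n.
have -> : K%:R * (a / K%:R) ^+ n = a ^+ n * (K%:R / K%:R ^+ n) by rewrite expr_div_n mulrCA.
have -> : a ^+ n / K%:R = a ^+ n * (K%:R / (K%:R * K%:R)) by field; rewrite gt_eqF.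
apply: ler_wpM2l; first exact: exprn_ge0.
apply: ler_wpM2l; first exact: ltW.
rewrite lef_pV2 ?posrE ?exprn_gt0 ?mulr_gt0 // -(subnKC n2) exprS exprS mulrA -[leLHS]mulr1.
by apply: ler_wpM2l; [apply: mulr_ge0; exact: ltW | apply: exprn_ege1; rewrite ler1n].
Qed.

(* The [K] cubes [-c + k h, -c + (k+1) h]^n, [h = 2c / K], cover the diagonal and have
   total volume [(2c)^n / K^(n-1) <= (2c)^n / K] because [n >= 2]. *)
Lemma diagonal_null (R : realType) (n : nat) (c : R) : 0 < c -> (1 < n)%N ->
  lebesgue_null [set x : 'I_n -> R | (forall k, - c <= x k <= c) /\ (forall i j, x i = x j)].
Proof.
move=> c0 n2 eps eps0.
set K1 := Num.truncn ((2 * c) ^+ n / eps); set K := K1.+1.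
have KR : 0 < K%:R :> R by rewrite ltr0n.
set h := 2 * c / K%:R; have h0 : 0 < h by apply: divr_gt0 => //; lra.
have hK : K%:R * h = 2 * c by rewrite /h mulrC divfK // gt_eqF.
exists (fun k _ => if (k < K)%N then - c + k%:R * h else 0),
       (fun k _ => if (k < K)%N then - c + k.+1%:R * h else 0).
split; [|split].
- by move=> k i /=; case: ifP => // _; rewrite -natr1 mulrDl mul1r; lra.
- move=> x [hb he]; have i0 : 'I_n := Ordinal (ltnW n2).
  have [k kK hk] := exists_grid_cell h0 hK (hb i0).
  by exists k => // i /=; rewrite (he i i0) ltnS kK.
- move=> m; under eq_bigr => k _.
    rewrite (_ : \prod_(i < n) _ = if (k < K)%N then h ^+ n else 0); first over.
    case: ifP => _; rewrite prodr_const card_ord; last by rewrite subrr expr0n gtn_eqF // ltnW.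
    by congr (_ ^+ _); rewrite -natr1 mulrDl mul1r; ring.
  rewrite sum_ord_truncated; apply: (@le_trans _ _ (K%:R * h ^+ n)).
    by apply: ler_wpM2r; [apply: exprn_ge0; lra | rewrite ler_nat geq_minr].
  have c2 : 0 <= 2 * c by lra.
  apply: le_trans (mul_expr_div_le n2 (ltn0Sn K1) c2) _.
  have := truncnS_gt ((2 * c) ^+ n / eps); rewrite -/K1 -/K ltr_pdivrMr // => hC.
  by rewrite ler_pdivrMr // [eps * _]mulrC ltW.
Qed.

Section Dynamics.
Variables (R : realType) (n : nat) (pos : rel 'I_n) (V1 V2 : {set 'I_n}).
Variables (c alpha beta : R).
Hypotheses (c_gt0 : 0 < c) (alpha_gt0 : 0 < alpha) (alpha_lt_half : 2 * alpha < 1).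
Hypotheses (beta_ge1 : 1 <= beta) (alpha_beta_ge1 : 1 <= alpha * (1 + beta)).
Hypotheses (pos_sym : signed_complete pos) (balanced : structurally_balanced pos V1 V2).

(* [lra] and [nra] ignore section hypotheses, so they are copied into the context. *)
Local Ltac params := have := c_gt0; have := alpha_gt0; have := alpha_lt_half;
  have := beta_ge1; have := alpha_beta_ge1; intros.

Local Notation st := (step pos c alpha beta).
Local Notation th := (theta pos alpha beta).

Definition boxed (x : 'I_n -> R) := forall k, - c <= x k <= c.

Lemma in_V2 k : (k \in V2) = (k \notin V1).
Proof.
case: balanced => [[_ _ hd hc] _]; move: (hd k) (hc k).
by case: (k \in V1); case: (k \in V2).
Qed.

Lemma exists_V1_V2 : exists i j, i \in V1 /\ j \in V2.
Proof. by case: balanced => [[[i hi] [j hj] _ _] _]; exists i, j. Qed.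

Lemma pos_balanced u v : u != v -> pos u v = ((u \in V1) == (v \in V1)).
Proof.
case: balanced => [_ [hn hp]] uv.
case hu: (u \in V1); case hv: (v \in V1) => /=.
- by apply: hp => //; rewrite hu hv.
- by have := hn u v uv hu; rewrite in_V2 hv => /(_ isT) [/negbTE ->].
- by have := hn v u; rewrite eq_sym in_V2 hu => /(_ uv hv isT) [_ /negbTE ->].
- by apply: hp => //; rewrite !in_V2 hu hv.
Qed.

Lemma thetaE u v : u != v -> th u v = if (u \in V1) == (v \in V1) then alpha else - beta.
Proof. by move=> uv; rewrite /theta pos_balanced. Qed.

Lemma theta_sym u v : u != v -> th u v = th v u.
Proof. by move=> uv; rewrite /theta pos_sym. Qed.

Lemma edge_ends_neq (e : edge n) : (val e).1 != (val e).2.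
Proof. by case: e => [[a b]] /= h; rewrite neq_ltn h. Qed.

Lemma step_endpoint e x u v : (u, v) = val e \/ (v, u) = val e ->
  st e x u = Fc c (x u + th u v * (x v - x u)).
Proof.
have hn := edge_ends_neq e.
case=> h; rewrite /step -h /= eqxx.
  by congr Fc; ring.
rewrite -h /= in hn; rewrite eq_sym (negbTE hn) theta_sym //; congr Fc; ring.
Qed.

Lemma stepP e x k : st e x k = x k \/ exists v,
  [/\ k != v, th k v = th (val e).1 (val e).2 & st e x k = Fc c (x k + th k v * (x v - x k))].
Proof.
have hn := edge_ends_neq e; have hn' : (val e).2 != (val e).1 by rewrite eq_sym.
case: (eqVneq k (val e).1) => [->|k1].
  right; exists (val e).2; split => //.
  by apply: step_endpoint; left; case: (val e).
case: (eqVneq k (val e).2) => [->|k2].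
  right; exists (val e).1; split => //; first by rewrite theta_sym.
  by apply: step_endpoint; right; case: (val e).
by left; rewrite /step (negbTE k1) (negbTE k2).
Qed.

Lemma step_boxed e x : boxed x -> boxed (st e x).
Proof.
move=> bx k; rewrite /step; case: ifP => _; first exact: Fc_bound.
by case: ifP => _; [exact: Fc_bound | exact: bx].
Qed.

(* [e0] is a junk value: it is only returned by [edge_of u u]. *)
Variable e0 : edge n.

Definition edge_of (u v : 'I_n) : edge n :=
  odflt e0 (insub (if (u < v)%N then (u, v) else (v, u))).

Lemma edge_of_ends u v : u != v -> (u, v) = val (edge_of u v) \/ (v, u) = val (edge_of u v).
Proof.
move=> uv; rewrite /edge_of; case: ifP => h; first by rewrite insubT /=; left.
by rewrite insubT /=; [rewrite ltn_neqAle leqNgt h andbT eq_sym | right].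
Qed.

Lemma step_edge_of_l u v x : u != v ->
  st (edge_of u v) x u = Fc c (x u + th u v * (x v - x u)).
Proof. by move=> uv; apply: step_endpoint; apply: edge_of_ends. Qed.

Lemma step_edge_of_r u v x : u != v ->
  st (edge_of u v) x v = Fc c (x v + th u v * (x u - x v)).
Proof.
move=> uv; rewrite theta_sym //; apply: step_endpoint.
by case: (edge_of_ends uv) => h; [right | left].
Qed.

Lemma step_edge_of_other u v x k : u != v -> k != u -> k != v -> st (edge_of u v) x k = x k.
Proof.
by move=> uv ku kv; rewrite /step; case: (edge_of_ends uv) => <- /=;
  rewrite (negbTE ku) (negbTE kv).
Qed.

Definition spread (x : 'I_n -> R) := \big[Num.max/0]_(p : 'I_n * 'I_n) `|x p.1 - x p.2|.

Lemma spread_ge x i j : x i - x j <= spread x.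
Proof.
apply: le_trans (ler_norm _) _.
exact: (le_bigmax 0 (fun p : 'I_n * 'I_n => `|x p.1 - x p.2|) (i, j)).
Qed.

Lemma spread_ge0 x : 0 <= spread x.
Proof. exact: bigmax_ge_id. Qed.

Lemma spread_attained x : exists i j, spread x = x i - x j.
Proof.
have [i [_ [_ _]]] := exists_V1_V2; rewrite /spread.
have [p _ ->] := eq_bigmax (i, i) xpredT (fun p : 'I_n * 'I_n => `|x p.1 - x p.2|) isT
  (fun _ _ => normr_ge0 _).
case: (lerP 0 (x p.1 - x p.2)) => h; first by exists p.1, p.2; rewrite ger0_norm.
by exists p.2, p.1; rewrite ltr0_norm // opprB.
Qed.

Lemma spread_boxed x : boxed x -> spread x <= 2 * c.
Proof.
move=> bx; apply: bigmax_le => [|[i j] _ /=]; first by params; lra.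
have /andP[? ?] := bx i; have /andP[? ?] := bx j.
by rewrite ler_norml; apply/andP; split; lra.
Qed.

Lemma spread_extremes x p q : spread x = x p - x q -> forall k, x q <= x k <= x p.
Proof.
move=> h k; have := spread_ge x k q; have := spread_ge x p k; rewrite h => ? ?.
by apply/andP; split; lra.
Qed.

Lemma spread_gt0 x : ~ (forall i j, x i = x j) -> 0 < spread x.
Proof.
move=> hx; rewrite lt_neqAle spread_ge0 andbT; apply/negP => /eqP h0; apply: hx => i j.
have := spread_ge x i j; have := spread_ge x j i; rewrite -h0 !subr_le0 => h1 h2.
by apply/eqP; rewrite eq_le h1 h2.
Qed.

Lemma spread_step_pos e x : boxed x -> th (val e).1 (val e).2 = alpha ->
  (1 - 2 * alpha) * spread x <= spread (st e x).
Proof.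
move=> bx he; have [p [q hpq]] := spread_attained x.
have hs := spread_ge0 x.
have close k : x k - alpha * spread x <= st e x k <= x k + alpha * spread x.
  case: (stepP e x k) => [->|[v [_ hv ->]]]; first by apply/andP; split; params; nra.
  rewrite he in hv; rewrite hv Fc_convex //; last by apply/andP; split; params; lra.
  have := spread_ge x k v; have := spread_ge x v k => ? ?.
  by apply/andP; split; params; nra.
have /andP[hp _] := close p; have /andP[_ hq] := close q.
by have := spread_ge (st e x) p q; params; lra.
Qed.

Lemma spread_step_neg e x : boxed x -> th (val e).1 (val e).2 = - beta ->
  spread x <= spread (st e x).
Proof.
move=> bx he; have [p [q hpq]] := spread_attained x.
have ext := spread_extremes hpq.
have hp : x p <= st e x p.
  case: (stepP e x p) => [->//|[v [_ hv ->]]]; rewrite he in hv; rewrite hv.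
  by apply: Fc_ge => //; have /andP[_ ?] := ext v; params; nra.
have hq : st e x q <= x q.
  case: (stepP e x q) => [->//|[v [_ hv ->]]]; rewrite he in hv; rewrite hv.
  by apply: Fc_le => //; have /andP[? _] := ext v; params; nra.
by have := spread_ge (st e x) p q; lra.
Qed.

Lemma spread_step e x : boxed x -> (1 - 2 * alpha) * spread x <= spread (st e x).
Proof.
move=> bx; have hs := spread_ge0 x.
case hp: (pos (val e).1 (val e).2).
  by apply: spread_step_pos bx _; rewrite /theta hp.
have : spread x <= spread (st e x) by apply: spread_step_neg bx _; rewrite /theta hp.
by params; nra.
Qed.

Lemma discordant_neq u v : (u \in V1) != (v \in V1) -> u != v.
Proof. by apply: contraNneq => ->. Qed.

Lemma discordant_pair x : exists u v,
  [/\ (u \in V1) != (v \in V1), x v <= x u & spread x <= 2 * (x u - x v)].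
Proof.
have [p [q hpq]] := spread_attained x; have hs := spread_ge0 x.
have [i [j [hi hj]]] := exists_V1_V2; rewrite in_V2 in hj.
case hd: ((p \in V1) != (q \in V1)); first by exists p, q; split => //; lra.
have [r [hr1 hr2]] : exists r, (r \in V1) != (p \in V1) /\ (r \in V1) != (q \in V1).
  move/negbT: hd; rewrite negbK => /eqP hd.
  by case hp: (p \in V1); [exists j | exists i]; rewrite -hd hp ?hi ?(negbTE hj).
case: (lerP (spread x) (2 * (x p - x r))) => h.
  by exists p, r; split; rewrite 1?eq_sym //; lra.
by exists r, q; split => //; lra.
Qed.

Lemma step_discordant u v x : (u \in V1) != (v \in V1) ->
  st (edge_of u v) x u = Fc c (x u + beta * (x u - x v)) /\
  st (edge_of u v) x v = Fc c (x v - beta * (x u - x v)).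
Proof.
move=> hd; have uv := discordant_neq hd.
have hth : th u v = - beta by rewrite thetaE // (negbTE hd).
by rewrite step_edge_of_l // step_edge_of_r // hth; split; congr Fc; ring.
Qed.

Lemma exists_step_spread_growth x : boxed x -> exists e,
  Num.min (2 * c) ((1 + beta) / 2 * spread x) <= spread (st e x).
Proof.
move=> bx; have [u [v [hd hvu hs]]] := discordant_pair x.
exists (edge_of u v); have [Hu Hv] := step_discordant x hd.
apply: le_trans (spread_ge _ u v); rewrite Hu Hv.
have /andP[? ?] := bx u; have /andP[? ?] := bx v.
have hg : 0 <= beta * (x u - x v) by params; nra.
apply: le_trans (Fc_spread c_gt0 _ _ hvu hg) => //.
rewrite le_min ge_min lexx /= ge_min; apply/orP; right.
have -> : x u - x v + beta * (x u - x v) = (1 + beta) / 2 * (2 * (x u - x v)) by field.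
by apply: ler_wpM2l => //; params; lra.
Qed.

Lemma exists_step_to_extremes x : boxed x -> 4 * c <= beta * spread x -> exists e i j,
  [/\ i \in V1, j \in V2 &
   (st e x i = c /\ st e x j = - c) \/ (st e x i = - c /\ st e x j = c)].
Proof.
move=> bx hb; have [u [v [hd hvu hs]]] := discordant_pair x.
have /andP[? ?] := bx u; have /andP[? ?] := bx v.
have hG : 2 * c <= beta * (x u - x v) by params; nra.
have [Hu Hv] := step_discordant x hd.
have {}Hu : st (edge_of u v) x u = c by rewrite Hu Fc_top //; lra.
have {}Hv : st (edge_of u v) x v = - c by rewrite Hv Fc_bot //; lra.
exists (edge_of u v); case hu: (u \in V1).
  by exists u, v; split => //; [rewrite in_V2; move: hd; rewrite hu | left].
by exists v, u; split => //; [move: hd; rewrite hu; case: (v \in V1) | rewrite in_V2 hu | right].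
Qed.

Definition run (w : seq (edge n)) (x : 'I_n -> R) := foldl (fun y e => st e y) x w.

Lemma run_cat w1 w2 x : run (w1 ++ w2) x = run w2 (run w1 x).
Proof. by rewrite /run foldl_cat. Qed.

Lemma run_rcons w e x : run (rcons w e) x = st e (run w x).
Proof. by rewrite /run foldl_rcons. Qed.

Lemma run_boxed w x : boxed x -> boxed (run w x).
Proof. by elim: w x => [//|e w IH] x bx; apply: IH; apply: step_boxed. Qed.

Lemma stepN e x : st e (fun k => - x k) = (fun k => - st e x k).
Proof.
apply: funext => k; rewrite /step.
by case: ifP => _; [|case: ifP => _ //]; rewrite -FcN //; congr Fc; ring.
Qed.

Lemma runN w x : run w (fun k => - x k) = (fun k => - run w x k).
Proof. by elim: w x => [//|e w IH] x /=; rewrite stepN IH. Qed.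

Lemma spread_run w x : boxed x -> (1 - 2 * alpha) ^+ size w * spread x <= spread (run w x).
Proof.
elim: w x => [|e w IH] x bx; first by rewrite expr0 mul1r.
apply: le_trans (IH _ (step_boxed e bx)).
rewrite [size _]/= exprSr -mulrA; apply: ler_wpM2l; last exact: spread_step.
by apply: exprn_ge0; params; lra.
Qed.

Lemma exists_run_spread_growth L x : boxed x -> exists w, size w = L /\
  Num.min (2 * c) (((1 + beta) / 2) ^+ L * spread x) <= spread (run w x).
Proof.
move=> bx; elim: L => [|L [w [sw hw]]].
  by exists [::]; split => //; rewrite expr0 mul1r ge_min lexx orbT.
have [e he] := exists_step_spread_growth (run_boxed w bx).
exists (rcons w e); split; first by rewrite size_rcons sw.
rewrite run_rcons; apply: le_trans he.
have hr : 1 <= (1 + beta) / 2 by params; lra.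
set B := spread (run w x); have hB : 0 <= B := spread_ge0 _.
rewrite exprSr mulrAC [X in Num.min _ X <= _]mulrC le_min ge_min lexx /=.
move: hw; rewrite ge_min => /orP[hw|hw]; rewrite ge_min; apply/orP.
  by left; apply: le_trans hw _; rewrite -[leLHS]mul1r ler_wpM2r.
by right; apply: ler_wpM2l => //; lra.
Qed.

Definition target k : R := if k \in V1 then c else - c.

Definition polarized_pos (x : 'I_n -> R) := [forall k, x k == target k].

Definition polarized x := polarized_pos x || polarized_pos (fun k => - x k).

Lemma step_polarized_pos e x : polarized_pos x -> st e x = x.
Proof.
move/forallP=> hx; apply: funext => k; case: (stepP e x k) => [//|[v [kv _ ->]]].
rewrite thetaE // (eqP (hx k)) (eqP (hx v)) /target.
have hb : 0 <= beta * c by params; nra.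
have := c_gt0; case: (k \in V1); case: (v \in V1) => /= ?.
- by rewrite subrr mulr0 addr0 Fc_id //; apply/andP; split; lra.
- by apply: Fc_top => //; lra.
- by apply: Fc_bot => //; lra.
- by rewrite subrr mulr0 addr0 Fc_id //; apply/andP; split; lra.
Qed.

Lemma step_polarized e x : polarized x -> st e x = x.
Proof.
case/orP => [|/(step_polarized_pos e)]; first exact: step_polarized_pos.
rewrite stepN => /(congr1 (fun y k => - y k)) /=.
by under eq_fun do rewrite opprK; under [RHS]eq_fun do rewrite opprK.
Qed.

Lemma run_polarized w x : polarized x -> run w x = x.
Proof. by elim: w => [//|e w IH] hx /=; rewrite step_polarized // IH. Qed.

Definition anchored i j (y : 'I_n -> R) := [/\ y i = c, y j = - c & boxed y].

(* Agent [k] first moves towards the anchor [i] of its own group, and is then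
   pushed to the boundary by the opposite anchor [j]; the last step restores [i]. *)
Lemma recruit i j k y : k != i -> k != j -> i != j ->
  th i k = alpha -> th k j = - beta -> th i j = - beta -> anchored i j y ->
  let z := run [:: edge_of i k; edge_of k j; edge_of i j] y in
  [/\ z i = c, z j = - c, z k = c & forall t, t != i -> t != j -> t != k -> z t = y t].
Proof.
move=> ki kj ij hik hkj hij [yi yj bY] z.
have /andP[yk1 yk2] := bY k.
set y1 := st (edge_of i k) y; set y2 := st (edge_of k j) y1.
have y1i : y1 i = c + alpha * (y k - c).
  by rewrite /y1 step_edge_of_l 1?eq_sym // hik yi Fc_convex //; apply/andP; split; params; lra.
have y1k : y1 k = y k + alpha * (c - y k).
  by rewrite /y1 step_edge_of_r 1?eq_sym // hik yi Fc_convex //; apply/andP; split; params; lra.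
have y1o t : t != i -> t != k -> y1 t = y t by move=> ? ?; rewrite /y1 step_edge_of_other // eq_sym.
have y1j : y1 j = - c by rewrite y1o 1?eq_sym.
have y2i : y2 i = y1 i by rewrite /y2 step_edge_of_other // eq_sym.
have y2k : y2 k = c.
  rewrite /y2 step_edge_of_l // hkj y1j y1k; apply: Fc_top => //.
  have : 0 <= (1 - alpha) * (y k + c) by params; nra.
  by params; nra.
have y2j : y2 j = - c.
  rewrite /y2 step_edge_of_r // hkj y1j y1k; apply: Fc_bot => //.
  by params; nra.
have y2o t : t != i -> t != j -> t != k -> y2 t = y t.
  by move=> ? ? ?; rewrite /y2 step_edge_of_other // y1o.
have zE : z = st (edge_of i j) y2 by [].
have a0 : 0 <= c + alpha * (y k - c) by params; nra.
have a1 : c <= beta * (c + (c + alpha * (y k - c))) by params; nra.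
split.
- rewrite zE step_edge_of_l // hij y2i y2j y1i; apply: Fc_top => //; lra.
- rewrite zE step_edge_of_r // hij y2i y2j y1i; apply: Fc_bot => //; params; nra.
- by rewrite zE step_edge_of_other // eq_sym.
- by move=> t ? ? ?; rewrite zE step_edge_of_other // y2o.
Qed.

Lemma step_anchored i j y : i \in V1 -> j \in V2 -> anchored i j y -> st (edge_of i j) y = y.
Proof.
move=> hi hj [yi yj _]; rewrite in_V2 in hj.
have ij : i != j by apply: contraNneq hj => <-.
have hth : th i j = - beta by rewrite thetaE // hi (negbTE hj).
have hb : 0 <= beta * c by params; nra.
apply: funext => t; case: (eqVneq t i) => [->|ti].
  by rewrite step_edge_of_l // hth yi yj Fc_top //; lra.
case: (eqVneq t j) => [->|tj]; last by rewrite step_edge_of_other.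
by rewrite step_edge_of_r // hth yi yj Fc_bot //; lra.
Qed.

(* All recruitment words have length 3; an anchor [k] gets three neutral steps. *)
Definition recruit_word i j k : seq (edge n) :=
  if (k == i) || (k == j) then nseq 3 (edge_of i j)
  else if k \in V1 then [:: edge_of i k; edge_of k j; edge_of i j]
  else [:: edge_of j k; edge_of k i; edge_of j i].

Lemma run_recruit_word i j k y : i \in V1 -> j \in V2 -> anchored i j y ->
  let z := run (recruit_word i j k) y in
  [/\ anchored i j z, z k = target k & forall t, y t = target t -> z t = target t].
Proof.
move=> hi hj hy; have [yi yj bY] := hy.
have hj' : j \notin V1 by rewrite -in_V2.
have ij : i != j by apply: contraNneq hj' => <-.
have [ti tj] : target i = c /\ target j = - c by rewrite /target hi (negbTE hj').
rewrite /recruit_word; case: ifP => hk.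
  rewrite /= !step_anchored //; split => //.
  by case/orP: hk => /eqP ->; rewrite ?ti ?tj.
move/negbT: hk; rewrite negb_or => /andP[ki kj].
have close u : boxed u -> u i = c -> u j = - c -> u k = target k ->
    (forall t, t != i -> t != j -> t != k -> u t = y t) ->
    [/\ anchored i j u, u k = target k & forall t, y t = target t -> u t = target t].
  move=> bu ui uj uk uo; split => // t ht.
  case: (eqVneq t i) => [->|?]; first by rewrite ui.
  case: (eqVneq t j) => [->|?]; first by rewrite uj.
  by case: (eqVneq t k) => [->|?]; rewrite ?uk ?uo.
have ik : i != k by rewrite eq_sym.
have jk : j != k by rewrite eq_sym.
have thij : th i j = - beta by rewrite thetaE // hi (negbTE hj').
case: ifP => hk1.
  have thik : th i k = alpha by rewrite thetaE // hi hk1.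
  have thkj : th k j = - beta by rewrite thetaE // hk1 (negbTE hj').
  have [zi zj zk zo] := recruit ki kj ij thik thkj thij hy.
  by apply: close => //; [exact: run_boxed | rewrite zk /target hk1].
have thjk : th j k = alpha by rewrite thetaE // hk1 (negbTE hj').
have thki : th k i = - beta by rewrite thetaE // hk1 hi.
have ji : j != i by rewrite eq_sym.
have thji : th j i = - beta by rewrite theta_sym.
have hN : anchored j i (fun t => - y t).
  split; rewrite ?yi ?yj ?opprK // => t; have /andP[? ?] := bY t; apply/andP; split; lra.
have [zj zi zk zo] := recruit kj ki ji thjk thki thji hN.
rewrite !runN in zj zi zk zo.
apply: close; [exact: run_boxed | lra | lra | rewrite /target hk1; lra |].
by move=> t ? ? ?; apply: oppr_inj; rewrite zo.
Qed.

Definition recruit_all i j := flatten [seq recruit_word i j k | k <- enum 'I_n].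

Lemma size_recruit_all i j : size (recruit_all i j) = (3 * n)%N.
Proof.
rewrite /recruit_all size_flatten /shape -map_comp.
rewrite (eq_map (_ : _ =1 fun=> 3%N)); last first.
  by move=> k /=; rewrite /recruit_word; case: ifP => //; case: ifP.
by rewrite sumnE big_map big_const_seq count_predT size_enum_ord iter_addn_0 mulnC.
Qed.

Lemma run_recruit_all i j y : i \in V1 -> j \in V2 -> anchored i j y ->
  forall t, run (recruit_all i j) y t = target t.
Proof.
move=> hi hj hy t; rewrite /recruit_all.
suff gen s u : anchored i j u -> let z := run (flatten [seq recruit_word i j k | k <- s]) u in
    anchored i j z /\ forall t, (t \in s) || (u t == target t) -> z t = target t.
  by apply: (gen _ _ hy).2; rewrite mem_enum.
elim: s u => [|k s IH] u hu /=; first by split => // t' /eqP.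
rewrite run_cat; have [hz hk hp] := run_recruit_word k hi hj hu.
have [hz' hp'] := IH _ hz; split => // t'; rewrite inE -orbA => /or3P[/eqP->|ts|/eqP ht].
- by apply: hp'; rewrite hk eqxx orbT.
- by apply: hp'; rewrite ts.
- by apply: hp'; rewrite hp // eqxx orbT.
Qed.

Definition block_length := (3 * n).+1.

Lemma polarizing_run x : boxed x -> 4 * c <= beta * spread x ->
  exists w, size w = block_length /\ polarized (run w x).
Proof.
move=> bx hb; have [e [i [j [hi hj hz]]]] := exists_step_to_extremes bx hb.
exists (e :: recruit_all i j); split; first by rewrite /= size_recruit_all.
have by' := step_boxed e bx; rewrite [run _ _]/=.
case: hz => [[zi zj]|[zi zj]].
  by apply/orP; left; apply/forallP => t; apply/eqP; apply: run_recruit_all.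
have hN : anchored i j (fun k => - st e x k).
  split; rewrite ?zi ?zj ?opprK // => k; have /andP[? ?] := by' k; apply/andP; split; lra.
by apply/orP; right; rewrite -runN; apply/forallP => t; apply/eqP; apply: run_recruit_all.
Qed.

Definition nedges : R := #|{: edge n}|%:R.

Lemma nedges_gt0 : 0 < nedges.
Proof. by rewrite /nedges ltr0n; apply/card_gt0P; exists e0. Qed.

(* [iter t mean_next f x] is the expectation of [f] at time [t] of the dynamics started at [x]. *)
Definition mean_next (f : ('I_n -> R) -> R) x := nedges^-1 * \sum_(e : edge n) f (st e x).

Fixpoint words t : seq (seq (edge n)) :=
  if t is t'.+1 then [seq e :: w | e <- index_enum (edge n), w <- words t'] else [:: [::]].

Lemma size_words t w : w \in words t -> size w = t.
Proof.
elim: t w => [|t IH] w /=; first by rewrite inE => /eqP ->.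
by case/allpairsP => [[e w'] [_ /IH hw ->]] /=; rewrite hw.
Qed.

Lemma mem_words t w : size w = t -> w \in words t.
Proof.
elim: t w => [|t IH] [|e w] //= [sw].
by apply/allpairsP; exists (e, w); split => //=; [exact: mem_index_enum | exact: IH].
Qed.

Lemma iter_mean_nextE t f x :
  iter t mean_next f x = nedges^-1 ^+ t * \sum_(w <- words t) f (run w x).
Proof.
elim: t x => [|t IH] x /=; first by rewrite big_seq1 expr0 mul1r.
rewrite big_allpairs_dep exprS -mulrA [in RHS]mulr_sumr; congr (_ * _).
by apply: eq_bigr => e _; rewrite IH.
Qed.

Lemma iter_mean_next_cst t (M : R) x : iter t mean_next (fun=> M) x = M.
Proof.
elim: t x => [//|t IH] x; rewrite /= /mean_next; under eq_bigr do rewrite IH.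
by rewrite sumr_const -mulr_natr mulrCA mulVf ?mulr1 // gt_eqF // nedges_gt0.
Qed.

Lemma iter_mean_nextZ t k f x : iter t mean_next (fun z => k * f z) x = k * iter t mean_next f x.
Proof.
elim: t x => [//|t IH] x /=; rewrite /mean_next.
by under eq_bigr do rewrite IH; rewrite -mulr_sumr mulrCA.
Qed.

Definition nondegenerate (y : 'I_n -> R) := boxed y /\ 0 < spread y.

Lemma nondegenerate_step e y : nondegenerate y -> nondegenerate (st e y).
Proof.
move=> [bY hy]; split; first exact: step_boxed.
by apply: lt_le_trans (spread_step e bY); apply: mulr_gt0 => //; params; lra.
Qed.

Lemma nondegenerate_run w y : nondegenerate y -> nondegenerate (run w y).
Proof. by elim: w y => [//|e w IH] y hy; apply: IH; apply: nondegenerate_step. Qed.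

Lemma iter_mean_next_le t f g : (forall y, nondegenerate y -> f y <= g y) ->
  forall y, nondegenerate y -> iter t mean_next f y <= iter t mean_next g y.
Proof.
move=> hfg; elim: t => [//|t IH] y hy /=.
apply: ler_wpM2l; first by rewrite invr_ge0 ltW // nedges_gt0.
by apply: ler_sum => e _; apply: IH; apply: nondegenerate_step.
Qed.

(* The run improving [M] to [d] has probability [nedges^-L]. *)
Lemma iter_mean_next_gap L f x M d : (forall w, size w = L -> f (run w x) <= M) ->
  (exists w, size w = L /\ f (run w x) <= d) ->
  iter L mean_next f x <= M - nedges^-1 ^+ L * (M - d).
Proof.
move=> hM [w0 [sw0 hw0]]; have hw0W := mem_words sw0.
rewrite iter_mean_nextE -{1}(iter_mean_next_cst L M x) iter_mean_nextE -mulrBr.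
apply: ler_wpM2l; first by rewrite exprn_ge0 // invr_ge0 ltW // nedges_gt0.
rewrite !(perm_big _ (perm_to_rem hw0W)) !big_cons /=.
suff : \sum_(w <- rem w0 (words L)) f (run w x) <= \sum_(w <- rem w0 (words L)) M by lra.
rewrite big_seq [leRHS]big_seq; apply: ler_sum => w /mem_rem hw.
exact/hM/size_words.
Qed.

Local Notation L := block_length.

Lemma block_prob_bounds : 0 < nedges^-1 ^+ L <= 1.
Proof.
have n1 : 1 <= nedges by rewrite /nedges ler1n; apply/card_gt0P; exists e0.
apply/andP; split; first by rewrite exprn_gt0 // invr_gt0 nedges_gt0.
by apply: exprn_ile1; [rewrite invr_ge0 ltW // nedges_gt0 | rewrite invf_le1 // nedges_gt0].
Qed.

Definition rho := 1 - (nedges^-1 ^+ L) ^+ 2 / 2.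

Lemma rho_ge0 : 0 <= rho.
Proof. by have /andP[? ?] := block_prob_bounds; rewrite /rho; nra. Qed.

Lemma rho_lt1 : rho < 1.
Proof. by have /andP[? _] := block_prob_bounds; rewrite /rho; nra. Qed.

Section Lyapunov.
Variable s : R.
Hypothesis s_gt0 : 0 < s.
Hypothesis s_contract : ((1 - 2 * alpha)^-1 ^+ L) `^ s <= 1 + nedges^-1 ^+ L / 2.
Hypothesis s_expand : 2 <= (beta / 2) `^ s.

Definition lyap x := if polarized x then 0 else (2 * c / spread x) `^ s.

Lemma lyap_le x : lyap x <= (2 * c / spread x) `^ s.
Proof. by rewrite /lyap; case: ifP => _ //; apply: powR_ge0. Qed.

Lemma powR_homo a b : 0 <= a -> a <= b -> a `^ s <= b `^ s.
Proof. by move=> a0 ab; apply: ge0_ler_powR; rewrite ?nnegrE //; [exact: ltW | exact: le_trans ab]. Qed.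

Lemma lyap_run_le w x : nondegenerate x -> size w = L ->
  lyap (run w x) <= ((1 - 2 * alpha)^-1 ^+ L) `^ s * (2 * c / spread x) `^ s.
Proof.
move=> [bx sx] sw; apply: le_trans (lyap_le _) _.
have q0 : 0 < (1 - 2 * alpha) ^+ L by apply: exprn_gt0; params; lra.
have hsr := spread_run w bx; rewrite sw in hsr.
have sr : 0 < spread (run w x) by apply: lt_le_trans hsr; exact: mulr_gt0.
have c2 : 0 <= 2 * c by params; lra.
rewrite -powRM; first last.
- by apply: divr_ge0 => //; exact: ltW.
- by rewrite exprn_ge0 // invr_ge0; params; lra.
apply: powR_homo; first by apply: divr_ge0 => //; exact: ltW.
have -> : (1 - 2 * alpha)^-1 ^+ L * (2 * c / spread x) = 2 * c / ((1 - 2 * alpha) ^+ L * spread x).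
  by rewrite exprVn; field; apply/andP; split; rewrite gt_eqF // mulr_gt0.
by apply: ler_wpM2l => //; rewrite lef_pV2 ?posrE // mulr_gt0.
Qed.

Lemma exists_run_lyap_half x : nondegenerate x -> ~~ polarized x ->
  exists w, size w = L /\ lyap (run w x) <= lyap x / 2.
Proof.
move=> [bx sx] hx; have c2 : 0 <= 2 * c by params; lra.
set u := 2 * c / spread x; have u0 : 0 <= u by apply: divr_ge0 => //; exact: ltW.
have -> : lyap x = u `^ s by rewrite /lyap (negbTE hx).
case: (lerP (4 * c) (beta * spread x)) => hb.
  have [w [sw hw]] := polarizing_run bx hb.
  by exists w; split; rewrite // /lyap hw /= divr_ge0 ?powR_ge0.
have hu : beta / 2 <= u by rewrite ler_pdivlMr // mulrAC ler_pdivrMr //; lra.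
have u2 : 2 <= u `^ s by apply: le_trans s_expand (powR_homo _ hu); params; lra.
have [w [sw hw]] := exists_run_spread_growth L bx.
exists w; split => //; apply: le_trans (lyap_le _) _.
have [_ sr] := nondegenerate_run w (conj bx sx).
have v0 : 0 <= 2 * c / spread (run w x) by apply: divr_ge0 => //; exact: ltW.
set r := ((1 + beta) / 2) ^+ L in hw.
have hr : beta / 2 <= r.
  have r1 : 1 <= (1 + beta) / 2 by params; lra.
  by apply: le_trans (ler_eXnr _ r1) => //; params; lra.
have r0 : 0 < r by params; apply: lt_le_trans hr; lra.
move: hw; rewrite ge_min => /orP[hw|hw].
  have : 2 * c / spread (run w x) <= 1 by rewrite ler_pdivrMr // mul1r.
  by move/(powR_homo v0); rewrite powR1; lra.
have r2 : 2 <= r `^ s by apply: le_trans s_expand (powR_homo _ hr); params; lra.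
have hv : 2 * c / spread (run w x) <= u / r.
  rewrite ler_pdivrMr // mulrAC ler_pdivlMr //.
  by apply: le_trans (ler_wpM2l u0 hw); rewrite /u mulrCA divfK ?gt_eqF // mulrC.
apply: le_trans (powR_homo v0 hv) _.
have uE : u `^ s = (u / r) `^ s * r `^ s.
  by rewrite -powRM ?divfK ?gt_eqF //; [exact: divr_ge0 u0 (ltW r0) | exact: ltW].
by rewrite uE; have := powR_ge0 (u / r) s; nra.
Qed.

Lemma lyap_contract x : nondegenerate x -> iter L mean_next lyap x <= rho * lyap x.
Proof.
move=> nx; case hx: (polarized x).
  have -> : lyap x = 0 by rewrite /lyap hx.
  rewrite mulr0 iter_mean_nextE big1_seq ?mulr0 // => w _.
  by rewrite run_polarized // /lyap hx.
have [w [sw hw]] := exists_run_lyap_half nx (negbT hx).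
have lx : lyap x = (2 * c / spread x) `^ s by rewrite /lyap hx.
rewrite lx in hw *.
have hQ := s_contract.
set u := (2 * c / spread x) `^ s; set p := nedges^-1 ^+ L in hQ *.
have := @iter_mean_next_gap L lyap x (((1 - 2 * alpha)^-1 ^+ L) `^ s * u) (u / 2).
move=> /(_ (fun w sw => lyap_run_le nx sw) (ex_intro _ w (conj sw hw))) /le_trans; apply.
have u0 : 0 <= u by apply: powR_ge0.
have /andP[p0 p1] := block_prob_bounds; rewrite -/p in p0 p1.
have h : 0 <= (1 - p) * u * (1 + p / 2 - ((1 - 2 * alpha)^-1 ^+ L) `^ s).
  by apply: mulr_ge0; [apply: mulr_ge0 => //; lra | lra].
by rewrite /rho -/p; nra.
Qed.

Lemma lyap_geometric k x : nondegenerate x -> iter (k * L) mean_next lyap x <= rho ^+ k * lyap x.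
Proof.
elim: k x => [|k IH] x nx; first by rewrite mul0n expr0 mul1r.
rewrite mulSn iterD.
apply: le_trans (iter_mean_next_le (g := fun y => rho ^+ k * lyap y) L IH nx) _.
rewrite iter_mean_nextZ exprSr -mulrA; apply: ler_wpM2l; first exact: exprn_ge0 rho_ge0.
exact: lyap_contract.
Qed.

Lemma unpolarized_le_lyap y : nondegenerate y -> (~~ polarized y)%:R <= lyap y.
Proof.
move=> [bY sy]; rewrite /lyap; case: (polarized y) => //=.
have h : 1 <= 2 * c / spread y by rewrite ler_pdivlMr // mul1r; apply: spread_boxed.
by have := ler_powR h (ltW s_gt0); rewrite powRr0.
Qed.

End Lyapunov.

Section Probability.
Variables (d : measure_display) (T : measurableType d) (P : probability T R).
Variable es : nat -> T -> edge n.
Hypothesis es_uniform : random_pair_selection P es.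
Variable x0 : 'I_n -> R.

Lemma traj_run ws t : traj pos c alpha beta ws x0 t = run (mkseq ws t) x0.
Proof. by elim: t => [//|t IH]; rewrite mkseqS run_rcons -IH. Qed.

Definition prefix (om : T) t := mkseq (fun k => es k om) t.

Definition cylinder (w : seq (edge n)) : set T := [set om | prefix om (size w) = w].

Lemma cylinderE w :
  cylinder w = \bigcap_(k in [set k | k \in iota 0 (size w)]) (es k @^-1` [set nth e0 w k]).
Proof.
apply/seteqP; split => om /=.
  by move=> h k; rewrite /= mem_iota add0n => hk; rewrite /preimage /= -[in RHS]h nth_mkseq.
move=> h; apply: (@eq_from_nth _ e0); first by rewrite size_mkseq.
move=> i; rewrite size_mkseq => hi; rewrite nth_mkseq //.
by apply: h; rewrite /= mem_iota add0n hi.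
Qed.

Lemma measurable_cylinder w : measurable (cylinder w).
Proof.
by rewrite cylinderE; case: es_uniform => hm _ _; apply: bigcap_measurableType => k _.
Qed.

Lemma P_cylinder w : P (cylinder w) = (nedges^-1 ^+ size w)%:E.
Proof.
case: es_uniform => _ hu hi; rewrite cylinderE hi ?iota_uniq //.
under eq_bigr do rewrite hu.
by rewrite prodEFin big_const_seq count_predT size_iota iter_mulr_1.
Qed.

Definition event_at (Q : pred ('I_n -> R)) t : set T := [set om | Q (run (prefix om t) x0)].

Lemma event_atE Q t :
  event_at Q t = \big[setU/set0]_(w <- words t | Q (run w x0)) cylinder w.
Proof.
rewrite -bigcup_seq_cond; apply/seteqP; split => om /=.
  move=> hq; exists (prefix om t); last by rewrite /cylinder /= size_mkseq.
  by rewrite /= mem_words ?size_mkseq.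
by case=> w /andP[hw hq]; rewrite /cylinder /= => hc; rewrite /event_at /= -(size_words hw) hc.
Qed.

Lemma measurable_event_at Q t : measurable (event_at Q t).
Proof. by rewrite event_atE; apply: bigsetU_measurable => w _; exact: measurable_cylinder. Qed.

Lemma P_event_at Q t : (P (event_at Q t) <= (iter t mean_next (fun y => (Q y)%:R) x0)%:E)%E.
Proof.
rewrite event_atE iter_mean_nextE.
apply: le_trans (le_measure_bigsetU _ _ _ measurable_cylinder) _.
rewrite big_seq_cond (eq_bigr (fun _ => (nedges^-1 ^+ t)%:E)); last first.
  by move=> w /andP[hw _]; rewrite -(size_words hw); exact: P_cylinder.
rewrite -big_seq_cond sumEFin lee_fin mulr_sumr big_mkcond /=.
by apply: ler_sum => w _; case: (Q _); rewrite ?mulr1 ?mulr0.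
Qed.

Definition never_polarized : set T :=
  \bigcap_(t in [set: nat]) event_at (fun y => ~~ polarized y) t.

Lemma measurable_never_polarized : measurable never_polarized.
Proof. by apply: bigcap_measurableType => t _; exact: measurable_event_at. Qed.

Lemma P_never_polarized s : 0 < s ->
  ((1 - 2 * alpha)^-1 ^+ L) `^ s <= 1 + nedges^-1 ^+ L / 2 -> 2 <= (beta / 2) `^ s ->
  nondegenerate x0 -> P never_polarized = 0%E.
Proof.
move=> s0 hQ hB nx.
have key k : (P never_polarized <= (rho ^+ k * lyap s x0)%:E)%E.
  have hE : (P never_polarized <= P (event_at (fun y => ~~ polarized y) (k * L)))%E.
    by apply: le_measure; rewrite ?inE; [exact: measurable_never_polarized |
      exact: measurable_event_at | move=> om; apply].
  apply: le_trans hE (le_trans (P_event_at _ _) _); rewrite lee_fin.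
  apply: le_trans (lyap_geometric s0 hQ hB k nx).
  by apply: iter_mean_next_le => // y ny; exact: unpolarized_le_lyap.
have hfin : P never_polarized \is a fin_num.
  rewrite ge0_fin_numE ?measure_ge0 //.
  by apply: le_lt_trans (probability_le1 _ measurable_never_polarized) _; rewrite ltry.
have r0 : 0 <= fine (P never_polarized) by apply: fine_ge0; exact: measure_ge0.
rewrite -(fineK hfin) in key *; congr (_%:E); apply/eqP; rewrite eq_le r0 andbT.
apply: (le0_geometric (r := rho) (C := lyap s x0)); first by rewrite rho_ge0 rho_lt1.
by move=> k; rewrite -lee_fin.
Qed.

Lemma traj_polarized_const ws t0 t : polarized (traj pos c alpha beta ws x0 t0) ->
  (t0 <= t)%N -> traj pos c alpha beta ws x0 t = traj pos c alpha beta ws x0 t0.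
Proof.
move=> ht /subnKC <-; elim: (t - t0)%N => [|k IH]; first by rewrite addn0.
by rewrite addnS /= IH step_polarized.
Qed.

Lemma traj_cvg_polarized ws t0 i : polarized (traj pos c alpha beta ws x0 t0) ->
  (fun t => traj pos c alpha beta ws x0 t i) @ \oo --> traj pos c alpha beta ws x0 t0 i.
Proof.
move=> ht; apply: cvg_near_cst; exists t0 => // t /= le_t0t.
by rewrite (traj_polarized_const ht le_t0t).
Qed.

Lemma target_V1 i : i \in V1 -> target i = c.
Proof. by rewrite /target => ->. Qed.

Lemma target_V2 i : i \in V2 -> target i = - c.
Proof. by rewrite in_V2 /target => /negbTE ->. Qed.

Lemma polarization_ae s : 0 < s ->
  ((1 - 2 * alpha)^-1 ^+ L) `^ s <= 1 + nedges^-1 ^+ L / 2 -> 2 <= (beta / 2) `^ s ->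
  nondegenerate x0 ->
  exists l : T -> R,
    measurable_fun setT l /\ (forall w, l w = c \/ l w = - c) /\
    {ae P, forall w,
       (forall i, i \in V1 ->
          (fun t => traj pos c alpha beta (fun t => es t w) x0 t i) @ \oo --> l w) /\
       (forall i, i \in V2 ->
          (fun t => traj pos c alpha beta (fun t => es t w) x0 t i) @ \oo --> - l w)}.
Proof.
move=> s0 hQ hB nx.
pose to_pos : set T := \bigcup_(t in [set: nat]) event_at polarized_pos t.
exists (fun om => if `[< to_pos om >] then c else - c); split; [|split].
- apply: measurable_fun_ifT; [|exact: measurable_cst|exact: measurable_cst].
  apply: (measurable_fun_bool true); rewrite setTI.
  have -> : (fun om => `[< to_pos om >]) @^-1` [set true] = to_pos.
    by apply/seteqP; split => om /= /asboolP.
  by apply: bigcup_measurable => t _; exact: measurable_event_at.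
- by move=> om; case: ifP; [left | right].
exists never_polarized; split; [exact: measurable_never_polarized | exact: P_never_polarized s0 hQ hB nx |].
move=> om /= hnot; apply: contrapT => hn; apply: hnot.
set ws := fun t => es t om.
have [t0 ht0] : exists t0, polarized (traj pos c alpha beta ws x0 t0).
  apply: contrapT => hno; apply: hn => t _; rewrite /event_at /= -traj_run.
  by apply/negP => h; apply: hno; exists t.
have cv i := @traj_cvg_polarized ws t0 i ht0.
case hp: (polarized_pos (traj pos c alpha beta ws x0 t0)).
  rewrite asboolT; last by exists t0 => //; rewrite /event_at /= -traj_run.
  move/forallP: hp => hp; split=> i hi; have := cv i; rewrite (eqP (hp i)).
    by rewrite target_V1.
  by rewrite target_V2.
have hn' : polarized_pos (fun k => - traj pos c alpha beta ws x0 t0 k).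
  by move: ht0; rewrite /polarized hp.
rewrite asboolF; last first.
  case=> t _; rewrite /event_at /= -traj_run => ht.
  have ht' : polarized (traj pos c alpha beta ws x0 t) by rewrite /polarized ht.
  move: hp; rewrite -(traj_polarized_const ht0 (leq_maxl t0 t)).
  by rewrite (traj_polarized_const ht' (leq_maxr t0 t)) ht.
move/forallP: hn' => hn'; split=> i hi; have := cv i.
all: have -> : traj pos c alpha beta ws x0 t0 i = - target i by rewrite -(eqP (hn' i)) opprK.
  by rewrite target_V1.
by rewrite target_V2.
Qed.

End Probability.

End Dynamics.

Unset Implicit Arguments.

Theorem theorem4p3 (R : realType) (n : nat) (c alpha : R)
    (pos : rel 'I_n) (V1 V2 : {set 'I_n})
    (d : measure_display) (T : measurableType d) (P : probability T R)
    (e : nat -> T -> edge n) :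
  0 < c -> 0 < alpha < 1 / 2 ->
  signed_complete pos -> structurally_balanced pos V1 V2 ->
  random_pair_selection P e ->
  exists beta0 : R, 0 < beta0 /\
    forall beta : R, beta0 < beta ->
    exists N : set ('I_n -> R), lebesgue_null N /\
      forall x0 : 'I_n -> R, (forall i, - c <= x0 i <= c) -> ~ N x0 ->
      exists l : T -> R,
        measurable_fun setT l /\ (forall w, l w = c \/ l w = - c) /\
        {ae P, forall w,
           (forall i, i \in V1 ->
              (fun t => traj pos c alpha beta (fun t => e t w) x0 t i) @ \oo --> l w) /\
           (forall i, i \in V2 ->
              (fun t => traj pos c alpha beta (fun t => e t w) x0 t i) @ \oo --> - l w)}.
Proof.
move=> c0 /andP[a0 ah] hsym hbal hrp; have a1 : 2 * alpha < 1 by lra.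
have n2 : (1 < n)%N.
  have [i [j [hi hj]]] := exists_V1_V2 hbal; rewrite (in_V2 hbal) in hj.
  by rewrite -[n]card_ord; apply/card_gt1P; exists i, j; split => //; apply: contraNneq hj => <-.
have e0 : edge n := exist _ (Ordinal (ltnW n2), Ordinal n2) isT.
set p := (nedges R n)^-1 ^+ block_length n.
have [s s0 hQ] : exists2 s : R, 0 < s & ((1 - 2 * alpha)^-1 ^+ block_length n) `^ s <= 1 + p / 2.
  apply: exists_powR_le; first by rewrite exprn_egt1 // invf_gt1; lra.
  suff : 0 < p by lra.
  by rewrite exprn_gt0 // invr_gt0 ltr0n; apply/card_gt0P; exists e0.
exists (Num.max alpha^-1 (2 * 2 `^ s^-1)); split; first by rewrite lt_max invr_gt0 a0.
move=> beta; rewrite gt_max => /andP[hb1 hb2].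
have ainv : 1 < alpha^-1 by rewrite invf_gt1 //; lra.
have b1 : 1 <= beta by lra.
have ab : 1 <= alpha * (1 + beta).
  have : alpha * alpha^-1 < alpha * beta by rewrite ltr_pM2l.
  by rewrite mulfV ?gt_eqF //; lra.
have hB : 2 <= (beta / 2) `^ s by apply: le_powR_of_root => //; rewrite ler_pdivlMr //; lra.
exists [set x : 'I_n -> R | (forall k, - c <= x k <= c) /\ (forall i j, x i = x j)].
split; first exact: diagonal_null.
move=> x0 hx0 hN.
apply: (polarization_ae c0 a0 a1 b1 ab hsym hbal e0 hrp s0 hQ hB); split => //.
by apply: spread_gt0 => hdiag; apply: hN.
Qed.
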